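(* Let $g:(0,\infty)\to(0,\infty)$ be bounded, non-decreasing and such that $g(t)=t\,g(1/t)$ for all $t>0$, and let $M=\sup_{t>0}g(t)$. Then $g(t)\ge g(1)\min\{1,t\}$ for all $t>0$. Moreover, if $\mu_\sigma$ is a symmetric probability density on $\mathbb{R}$, then for every $a\in\mathbb{R}$ the quantity $Z(a)=\int_{\mathbb{R}}g(e^{wa})\mu_\sigma(w)dw$ satisfies $\frac{g(1)}{2}\le Z(a)\le M$.
   Context: In the paper $a=\partial_i\log\pi(x)$ and $Z(a)=Z_i(x)$ is the normalising constant of the $i$-th coordinate of the locally-balanced proposal. *)

From HB Require Import structures.
From mathcomp Require Import all_boot all_order all_algebra.
From mathcomp Require Import all_classical all_reals all_analysis.
Set Implicit Arguments. Unset Strict Implicit. Unset Printing Implicit Defensive.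
Import Order.TTheory GRing.Theory Num.Theory.
Local Open Scope classical_set_scope.
Local Open Scope ring_scope.

Definition sym_prob_density (R : realType) (mu : R -> R) : Prop :=
  [/\ (forall w, 0 <= mu w),
      measurable_fun setT mu,
      ((\int[@lebesgue_measure R]_(w in setT) (mu w)%:E)%E = 1%E)
    & (forall w, mu (- w) = mu w)].

(* Symmetry g(t) = t g(1/t) gives g(t) >= t g(1) for t <= 1, and monotonicity
   gives g(t) >= g(1) for t >= 1.  For Z(a), the substitution w -> -w and the
   symmetry of the density give
   2 Z(a) = \int (g(e^{wa}) + g(e^{-wa})) mu(w) dw; one of the two exponents is
   nonnegative, so by monotonicity the bracket is at least g(1), whence
   Z(a) >= g(1)/2.  The upper bound Z(a) <= M holds because mu has mass 1. *)
From HB Require Import structures.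
From mathcomp Require Import all_boot all_order all_algebra.
From mathcomp Require Import all_classical all_reals all_analysis.
From mathcomp Require Import measurable_realfun lra.
Import Order.TTheory GRing.Theory Num.Theory.
Local Open Scope classical_set_scope.
Local Open Scope ring_scope.

Lemma sym_nondecreasing_ge_min (R : realType) (g : R -> R) :
  0 <= g 1 ->
  (forall s t, 0 < s -> s <= t -> g s <= g t) ->
  (forall t, 0 < t -> g t = t * g t^-1) ->
  forall t, 0 < t -> g 1 * Num.min 1 t <= g t.
Proof.
move=> g1_ge0 gmono gsym t t_gt0.
have [t_ge1|t_lt1] := leP 1 t.
  by rewrite mulr1 gmono.
rewrite (gsym t t_gt0) mulrC ler_wpM2l ?(ltW t_gt0) // gmono //.
by rewrite invf_ge1 // ltW.
Qed.

Lemma nondecreasing_addN_ge (R : realDomainType) (h : R -> R) :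
  {homo h : x y / x <= y} -> (forall x, 0 <= h x) ->
  forall x, h 0 <= h x + h (- x).
Proof.
move=> hmono h_ge0 x.
have [x_ge0|x_lt0] := leP 0 x.
  by rewrite ler_wpDr // hmono.
by rewrite ler_wpDl // hmono // lerNr oppr0 ltW.
Qed.

Lemma lee_div2_addxx (R : realFieldType) (c : R) (x : \bar R) :
  (c%:E <= x + x)%E -> ((c / 2)%:E <= x)%E.
Proof.
case: x => [r||] //=; last by move=> _; rewrite leey.
by rewrite -EFinD !lee_fin => ?; lra.
Qed.

Lemma ge0_integral_reflect {R : realType} (f : R -> \bar R) :
  measurable_fun setT f -> (forall x, (0 <= f x)%E) ->
  (\int[@lebesgue_measure R]_(x in setT) f x =
   \int[@lebesgue_measure R]_(x in setT) f (- x)%R)%E.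
Proof.
move=> mf f_ge0.
have mN : measurable_fun setT (-%R : measurableTypeR R -> measurableTypeR R).
  exact: oppr_measurable.
have := ge0_integral_pushforward mN (@lebesgue_measure R) measurableT mf
  (fun y _ => f_ge0 y).
rewrite preimage_setT => <-.
apply: eq_measure_integral => A mA _.
exact/esym/lebesgue_measureN.
Qed.

Section symmetric_density.
Context {R : realType} {mu : R -> R} (mu_density : sym_prob_density mu).
Local Notation leb := (@lebesgue_measure R).

Let mu_ge0 w : 0 <= mu w. Proof. by case: mu_density. Qed.

Let mu_measurable : measurable_fun setT mu. Proof. by case: mu_density. Qed.

Let mu_mass1 : (\int[leb]_(w in setT) (mu w)%:E = 1)%E.
Proof. by case: mu_density. Qed.

Let muN w : mu (- w) = mu w. Proof. by case: mu_density. Qed.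

Let cst_mu_integral {c : R} : 0 <= c ->
  (\int[leb]_(w in setT) (c * mu w)%:E = c%:E)%E.
Proof.
move=> c_ge0; under eq_integral do rewrite EFinM.
rewrite ge0_integralZl_EFin // ?mu_mass1 ?mule1 //.
- by move=> w _; rewrite lee_fin.
- exact/measurable_EFinP.
Qed.

Section weighted_integral.
Variable f : R -> R.
Hypothesis f_measurable : measurable_fun setT f.
Hypothesis f_ge0 : forall w, 0 <= f w.

Let fmu_measurable : measurable_fun setT (fun w => (f w * mu w)%:E).
Proof. exact/measurable_EFinP/measurable_funM. Qed.

Let fmu_ge0 w : (0 <= (f w * mu w)%:E)%E.
Proof. by rewrite lee_fin mulr_ge0. Qed.

Lemma density_integral_le (M : R) : (forall w, f w <= M) ->
  (\int[leb]_(w in setT) (f w * mu w)%:E <= M%:E)%E.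
Proof.
move=> f_le_M; have M_ge0 : 0 <= M := le_trans (f_ge0 0) (f_le_M 0).
rewrite -(cst_mu_integral M_ge0); apply: ge0_le_integral => //.
- exact/measurable_EFinP/measurable_funM.
- by move=> w _; rewrite lee_fin ler_wpM2r.
Qed.

Lemma sym_density_integral_ge (c : R) : 0 <= c ->
  (forall w, c <= f w + f (- w)) ->
  ((c / 2)%:E <= \int[leb]_(w in setT) (f w * mu w)%:E)%E.
Proof.
move=> c_ge0 f_addN_ge; apply: lee_div2_addxx.
pose fN w := f (- w).
have fNmu_measurable : measurable_fun setT (fun w => (fN w * mu w)%:E).
  apply/measurable_EFinP/measurable_funM => //.
  by apply: (measurableT_comp f_measurable); exact: oppr_measurable.
have fNmu_ge0 w : (0 <= (fN w * mu w)%:E)%E by rewrite lee_fin mulr_ge0 ?f_ge0.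
have reflect_fmu : (\int[leb]_(w in setT) (f w * mu w)%:E =
                    \int[leb]_(w in setT) (fN w * mu w)%:E)%E.
  rewrite (ge0_integral_reflect _ fmu_measurable) //.
  by apply: eq_integral => w _; rewrite muN.
rewrite {2}reflect_fmu -ge0_integralD // -(cst_mu_integral c_ge0).
apply: ge0_le_integral => //.
- by move=> w _; rewrite lee_fin mulr_ge0.
- exact/measurable_EFinP/measurable_funM.
- exact: emeasurable_funD.
- by move=> w _; rewrite -EFinD lee_fin -mulrDl ler_wpM2r.
Qed.

End weighted_integral.

End symmetric_density.

Theorem lemma8 (R : realType) (g : R -> R)
  (gpos : forall t, 0 < t -> 0 < g t)
  (gbnd : exists B : R, forall t, 0 < t -> g t <= B)
  (gmono : forall s t, 0 < s -> s <= t -> g s <= g t)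
  (gsym : forall t, 0 < t -> g t = t * g t^-1) :
  let M := sup [set g t | t in `]0, +oo[] in
  (forall t, 0 < t -> g 1 * Num.min 1 t <= g t) /\
  (forall mu : R -> R, sym_prob_density mu ->
     forall a : R,
       let Z := (\int[@lebesgue_measure R]_(w in setT) (g (expR (w * a)) * mu w)%:E)%E in
       ((g 1 / 2)%:E <= Z)%E /\ (Z <= M%:E)%E).
Proof.
move=> M; split; first exact: sym_nondecreasing_ge_min (ltW (gpos _ ltr01)) gmono gsym.
move=> mu mu_density a Z.
pose h x := g (expR x).
have h_ge0 x : 0 <= h x by exact/ltW/gpos/expR_gt0.
have h_mono : {homo h : x y / x <= y}.
  by move=> x y xy; rewrite gmono ?expR_gt0 ?ler_expR.
have h_le_M x : h x <= M.
  apply: ub_le_sup; last by exists (expR x) => //=; rewrite in_itv /= andbT expR_gt0.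
  have [B gB] := gbnd; exists B => _ [t /= t_pos <-]; apply: gB.
  by move: t_pos; rewrite in_itv /= andbT.
have f_measurable : measurable_fun setT (fun w : R => g (expR (w * a))).
  apply: (measurableT_comp (f := h)); last exact: mulrr_measurable.
  exact: nondecreasing_measurable.
split.
- rewrite /Z -[in g 1]expR0.
  apply: (sym_density_integral_ge mu_density _ f_measurable _ _ (h_ge0 0)).
    by move=> w; exact: h_ge0.
  by move=> w; rewrite mulNr nondecreasing_addN_ge.
- apply: (density_integral_le mu_density _ f_measurable).
    by move=> w; exact: h_ge0.
  by move=> w; exact: h_le_M.
Qed.
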